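(* If $G$ is a finite non-cyclic group of prime power order with $\psi'(G)>\frac{19}{43}$, then $G$ is a $2$-group.
   Context: For a finite group $G$, $\psi(G)=\sum_{x\in G} o(x)$ and $\psi'(G)=\psi(G)/\psi(\mathcal{C}_{|G|})$, where $\mathcal{C}_n$ is the cyclic group of order $n$. *)

From mathcomp Require Import all_boot all_order all_algebra all_fingroup all_solvable.
Set Implicit Arguments. Unset Strict Implicit. Unset Printing Implicit Defensive.

Definition psi (gT : finGroupType) (G : {set gT}) : nat := \sum_(x in G) #[x]%g.

(* psi of the cyclic group C_n of order n (n > 0), realized as the additive
   group 'I_n (which is cyclic of order n). For n = 0 this is psi of the
   trivial group; it is only used with n = #|G| > 0. *)
Definition psi_cyclic (n : nat) : nat := psi [set: 'I_n.-1.+1].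

Definition psi' (gT : finGroupType) (G : {set gT}) : rat :=
  ((psi G)%:R / (psi_cyclic #|G|)%:R)%R.

(* A non-cyclic group of order p^(k+2) has no element of order p^(k+2).  If it
   has one of order p^(k+1), the p^k elements of the cyclic subgroup generated
   by its p-th power have order at most p^k; otherwise every order is at most
   p^k.  Either way psi(G) <= t^2 + (p^2 t - t) p t with t = p^k.  In the cyclic
   group of order p^(k+2), the generators of the two largest cyclic subgroups
   alone contribute (p^2 t - p t) p^2 t + (p t - t) p t to psi.  For p >= 3 the
   ratio of the two bounds is at most 19/43, so psi'(G) > 19/43 forces p = 2. *)

From mathcomp Require Import all_boot all_order all_algebra all_fingroup all_solvable.
From mathcomp Require Import zify lra.
Set Implicit Arguments. Unset Strict Implicit.
Import GroupScope Order.TTheory GRing.Theory Num.Theory.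

Lemma order_cycleX_prime (gT : finGroupType) (a : gT) p j :
  prime p -> #[a] = (p ^ j.+1)%N -> #[a ^+ p] = (p ^ j)%N.
Proof.
move=> pp oa; rewrite orderXdiv oa ?expnS ?mulKn ?prime_gt0 //.
exact: dvdn_mulr.
Qed.

(* The elements of <[a]> outside <[a ^+ p]> are exactly its generators. *)
Lemma sum_order_cycle_setD_cycleX (gT : finGroupType) (a : gT) p j :
  prime p -> #[a] = (p ^ j.+1)%N ->
  (\sum_(x in <[a]> :\: <[a ^+ p]>) #[x] = (p ^ j.+1 - p ^ j) * p ^ j.+1)%N.
Proof.
move=> pp oa; have oap := order_cycleX_prime pp oa.
rewrite (eq_bigr (fun _ => p ^ j.+1)%N).
  rewrite sum_nat_const cardsD (setIidPr _); last by rewrite cycle_subG mem_cycle.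
  by rewrite -/#[a] -/#[a ^+ p] oa oap.
move=> _ /setDP [/cycleP [i ->] notin_ap].
have coprime_i : coprime (p ^ j.+1) i.
  rewrite coprime_pexpl // prime_coprime //; apply/negP => /dvdnP [q iq].
  by move: notin_ap; rewrite iq mulnC expgM mem_cycle.
by rewrite orderXgcd oa (eqP coprime_i) divn1.
Qed.

Lemma psi_cyclic_pexp_ge p k : prime p ->
  ((p ^ k.+2 - p ^ k.+1) * p ^ k.+2 + (p ^ k.+1 - p ^ k) * p ^ k.+1
     <= psi_cyclic (p ^ k.+2))%N.
Proof.
move=> pp; rewrite /psi_cyclic /psi.
set a := (Zp1 : 'I_(p ^ k.+2).-1.+1).
have oa : #[a] = (p ^ k.+2)%N by rewrite order_Zp1 prednK // expn_gt0 prime_gt0.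
have oap := order_cycleX_prime pp oa.
rewrite Zp_cycle -/a (big_setID <[a ^+ p]>) /= addnC.
rewrite (setIidPr _); last by rewrite cycle_subG mem_cycle.
rewrite (sum_order_cycle_setD_cycleX pp oa); apply: leq_add => //.
by rewrite (big_setID <[a ^+ p ^+ p]>) /= (sum_order_cycle_setD_cycleX pp oap) leq_addl.
Qed.

Lemma noncyclic_pgroup_card (gT : finGroupType) (G : {group gT}) p :
  prime p -> p.-group G -> ~~ cyclic G -> exists k, #|G| = (p ^ k.+2)%N.
Proof.
move=> pp pG ncG; case: (logn p #|G|) (card_pgroup pG) => [|[|k]] oG.
- by rewrite (card1_trivg oG) cyclic1 in ncG.
- by rewrite prime_cyclic // oG expn1 in ncG.
- by exists k.
Qed.

Lemma order_dvdn_noncyclic_pgroup (gT : finGroupType) (G : {group gT}) p k x :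
  prime p -> #|G| = (p ^ k.+1)%N -> ~~ cyclic G -> x \in G -> (#[x] %| p ^ k)%N.
Proof.
move=> pp oG ncG xG.
have [m le_m_k1 ox] : exists2 m, m <= k.+1 & #[x] = (p ^ m)%N.
  by apply/dvdn_pfactor => //; rewrite -oG order_dvdG.
have [m_lt_k1 | ] := ltnP m k.+1; first by rewrite ox dvdn_Pexp2l ?prime_gt1.
move=> le_k1_m; have em : m = k.+1 by apply/eqP; rewrite eqn_leq le_m_k1.
case/negP: ncG; apply/cyclicP; exists x; apply/eqP; rewrite eq_sym eqEcard.
by rewrite cycle_subG xG -/#[x] ox em oG leqnn.
Qed.

Lemma psi_noncyclic_le (gT : finGroupType) (G : {group gT}) p k :
  prime p -> #|G| = (p ^ k.+2)%N -> ~~ cyclic G ->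
  (psi G <= p ^ k * p ^ k + (p ^ k.+2 - p ^ k) * p ^ k.+1)%N.
Proof.
move=> pp oG ncG.
have ox := order_dvdn_noncyclic_pgroup pp oG ncG.
have pk_gt0 : 0 < p ^ k by rewrite expn_gt0 prime_gt0.
have [/exists_inP [x xG /eqP ox1] | no_x] :=
  boolP [exists x in G, #[x] == (p ^ k.+1)%N].
  have oH := order_cycleX_prime pp ox1.
  have sHG : <[x ^+ p]> \subset G by rewrite cycle_subG groupX.
  rewrite /psi (big_setID <[x ^+ p]>) /= (setIidPr sHG); apply: leq_add.
    rewrite -oH -sum_nat_const; apply: leq_sum => y yH.
    exact: dvdn_leq (order_gt0 _) (order_dvdG yH).
  have -> : (p ^ k.+2 - p ^ k = #|G :\: <[x ^+ p]>|)%N.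
    by rewrite cardsD (setIidPr sHG) oG -/#[x ^+ p] oH.
  rewrite -sum_nat_const; apply: leq_sum => y /setDP [yG _].
  by apply: dvdn_leq; [rewrite expn_gt0 prime_gt0 | exact: ox].
have orders_le : forall y, y \in G -> (#[y] <= p ^ k)%N.
  move=> y yG; have [m le_m_k1 oy] := dvdn_pfactor _ _ pp (ox y yG).
  rewrite oy leq_exp2l ?prime_gt1 //; rewrite leq_eqVlt in le_m_k1.
  case/orP: le_m_k1 => [/eqP em | //].
  by move: no_x; rewrite negb_exists_in => /forall_inP/(_ y yG); rewrite oy em eqxx.
apply: leq_trans (_ : p ^ k.+2 * p ^ k <= _)%N.
  by rewrite /psi -oG -sum_nat_const leq_sum.
have p2 := prime_gt1 pp; rewrite !expnSr; move: (p ^ k)%N pk_gt0 => t t_gt0; nia.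
Qed.

Lemma noncyclic_cyclic_bound_ratio p k : 3 <= p ->
  (43 * (p ^ k * p ^ k + (p ^ k.+2 - p ^ k) * p ^ k.+1)
     <= 19 * ((p ^ k.+2 - p ^ k.+1) * p ^ k.+2 + (p ^ k.+1 - p ^ k) * p ^ k.+1))%N.
Proof.
move=> p_ge3; have : 0 < p ^ k by rewrite expn_gt0; case: p p_ge3.
by rewrite !expnSr; move: (p ^ k)%N => t t_gt0; nia.
Qed.

Theorem corollary3p2 (gT : finGroupType) (G : {group gT}) (p : nat) :
  prime p -> (p.-group G)%g -> ~~ cyclic G ->
  ((19%:R / 43%:R : rat) < psi' G)%R ->
  (2.-group G)%g.
Proof.
move=> pp pG ncG psi'_gt.
have [<- // | p_neq2] := eqVneq p 2.
have p_ge3 : 3 <= p by have := prime_gt1 pp; lia.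
have [k oG] := noncyclic_pgroup_card pp pG ncG.
have psi_le : (43 * psi G <= 19 * psi_cyclic #|G|)%N.
  rewrite oG; apply: leq_trans (leq_mul (leqnn 43) (psi_noncyclic_le pp oG ncG)) _.
  apply: leq_trans (noncyclic_cyclic_bound_ratio k p_ge3) _.
  by rewrite leq_mul2l psi_cyclic_pexp_ge.
have psi_cyclic_gt0 : (0 < psi_cyclic #|G|)%N.
  by rewrite /psi_cyclic /psi (bigD1 ord0) ?inE //= addn_gt0 order_gt0.
move: psi'_gt; rewrite /psi' ltr_pdivlMr ?ltr0n //.
rewrite ltNge => /negP psi_not_le; exfalso; apply: psi_not_le.
have : ((43 * psi G)%:R <= (19 * psi_cyclic #|G|)%:R :> rat)%R.
  by rewrite ler_nat.
by rewrite !natrM; lra.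
Qed.
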